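(* Let $G_3$ be the graph with vertices $v_1,\dots,v_8$ and edges $a_1=v_1v_2$, $a_2=v_2v_3$, $a_3=v_3v_4$, $a_4=v_4v_5$, $a_5=v_1v_5$, $a_6=v_1v_8$, $a_7=v_2v_6$, $a_8=v_3v_6$, $a_9=v_4v_7$, $a_{10}=v_5v_8$, $a_{11}=v_6v_7$, $a_{12}=v_7v_8$. Let $\gamma_1=e_1+e_3+e_{10}+e_{11}$, $\gamma_2=e_2+e_4+e_6+e_{11}$, $\gamma_3=e_3+e_5+e_7+e_{12}$, $\gamma_4=e_2+e_5+e_6+e_7+e_8+2e_9+e_{10}$, $\gamma_5=e_2+e_3+e_5+e_6+e_7+e_9+e_{10}+e_{11}$, $\gamma_6=e_1+e_4+e_8+e_{12}$, $\gamma_7=e_2+e_4+e_5+e_6+e_7+e_8+e_9+e_{12}$, $\gamma_8=e_1+e_8+e_9+e_{10}$. Then any $\gamma\in S(G_3)$ can be uniquely written in one of the following five types, with $l_1,\dots,l_5\in\mathbb{N}$: $T_a$: $l_1\gamma_1+l_2\gamma_2+l_3\gamma_3+l_4\gamma_4+l_5\gamma_5$; $T_b$: $\gamma_8+l_1\gamma_1+l_2\gamma_2+l_3\gamma_3+l_4\gamma_4+l_5\gamma_8$; $T_{c_1}$: $\gamma_6+l_1\gamma_1+l_2\gamma_2+l_3\gamma_3+l_4\gamma_6+l_5\gamma_8$; $T_{c_2}$: $\gamma_4+\gamma_6+l_1\gamma_2+l_2\gamma_3+l_3\gamma_4+l_4\gamma_6+l_5\gamma_8$; $T_{c_3}$: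 $\gamma_7+l_1\gamma_2+l_2\gamma_3+l_3\gamma_4+l_4\gamma_6+l_5\gamma_7$.
   Context: For a finite graph $G$ with edges $a_1,\dots,a_n$, a magic labelling is an assignment of nonnegative integer labels $\alpha_i$ to the edges $a_i$ such that for every vertex $v$ the sum of the labels of the edges incident to $v$ equals the same number $s$ (the magic sum). A labelling is identified with $(\alpha_1,\dots,\alpha_n)\in\mathbb{N}^n$, and $S(G)$ is the set of all magic labellings. $e_i$ is the $i$-th unit vector of $\mathbb{R}^{12}$, $\mathbb{N}=\{0,1,2,\dots\}$. *)

From mathcomp Require Import all_boot.
Set Implicit Arguments. Unset Strict Implicit. Unset Printing Implicit Defensive.

(* A labelling of the 12 edges a_1..a_12: edge a_k is the index (k-1 : 'I_12). *)
Definition lab := {ffun 'I_12 -> nat}.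

Definition ladd (a b : lab) : lab := [ffun i => a i + b i].
Definition lscale (n : nat) (a : lab) : lab := [ffun i => n * a i].
Infix "⊕" := ladd (at level 50, left associativity).
Infix "⊙" := lscale (at level 40).

Definition e (k : nat) : lab := [ffun i : 'I_12 => nat_of_bool (i.+1 == k)].

Definition G3_ends (k : nat) : nat * nat :=
  match k with
  | 1 => (1, 2) | 2 => (2, 3) | 3 => (3, 4) | 4 => (4, 5)
  | 5 => (1, 5) | 6 => (1, 8) | 7 => (2, 6) | 8 => (3, 6)
  | 9 => (4, 7) | 10 => (5, 8) | 11 => (6, 7) | 12 => (7, 8)
  | _ => (0, 0)
  end.

Definition incident (v k : nat) : bool :=
  (v == fst (G3_ends k)) || (v == snd (G3_ends k)).

(* magic labellings S(G_3): all vertex sums (over the vertices v_1..v_8) agree *)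
Definition magic (a : lab) : Prop :=
  exists s : nat, forall v : 'I_8,
    \sum_(i : 'I_12 | incident v.+1 i.+1) a i = s.

Definition gamma1 : lab := e 1 ⊕ e 3 ⊕ e 10 ⊕ e 11.
Definition gamma2 : lab := e 2 ⊕ e 4 ⊕ e 6 ⊕ e 11.
Definition gamma3 : lab := e 3 ⊕ e 5 ⊕ e 7 ⊕ e 12.
Definition gamma4 : lab := e 2 ⊕ e 5 ⊕ e 6 ⊕ e 7 ⊕ e 8 ⊕ 2 ⊙ e 9 ⊕ e 10.
Definition gamma5 : lab := e 2 ⊕ e 3 ⊕ e 5 ⊕ e 6 ⊕ e 7 ⊕ e 9 ⊕ e 10 ⊕ e 11.
Definition gamma6 : lab := e 1 ⊕ e 4 ⊕ e 8 ⊕ e 12.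
Definition gamma7 : lab := e 2 ⊕ e 4 ⊕ e 5 ⊕ e 6 ⊕ e 7 ⊕ e 8 ⊕ e 9 ⊕ e 12.
Definition gamma8 : lab := e 1 ⊕ e 8 ⊕ e 9 ⊕ e 10.

Definition zero_lab : lab := [ffun _ => 0].

Inductive ty := Ta | Tb | Tc1 | Tc2 | Tc3.

Definition typed_form (t : ty) (l : nat * nat * nat * nat * nat) : lab :=
  let '(l1, l2, l3, l4, l5) := l in
  match t with
  | Ta  => l1 ⊙ gamma1 ⊕ l2 ⊙ gamma2 ⊕ l3 ⊙ gamma3 ⊕ l4 ⊙ gamma4 ⊕ l5 ⊙ gamma5
  | Tb  => gamma8 ⊕ l1 ⊙ gamma1 ⊕ l2 ⊙ gamma2 ⊕ l3 ⊙ gamma3 ⊕ l4 ⊙ gamma4 ⊕ l5 ⊙ gamma8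
  | Tc1 => gamma6 ⊕ l1 ⊙ gamma1 ⊕ l2 ⊙ gamma2 ⊕ l3 ⊙ gamma3 ⊕ l4 ⊙ gamma6 ⊕ l5 ⊙ gamma8
  | Tc2 => gamma4 ⊕ gamma6 ⊕ l1 ⊙ gamma2 ⊕ l2 ⊙ gamma3 ⊕ l3 ⊙ gamma4 ⊕ l4 ⊙ gamma6 ⊕ l5 ⊙ gamma8
  | Tc3 => gamma7 ⊕ l1 ⊙ gamma2 ⊕ l2 ⊙ gamma3 ⊕ l3 ⊙ gamma4 ⊕ l4 ⊙ gamma6 ⊕ l5 ⊙ gamma7
  end.

From mathcomp Require Import all_boot zify.

(* A magic labelling of G_3 is determined by its labels (a, b, c, d, f) on the
   edges a_8, ..., a_12: the vertex v_7 gives the magic sum b + d + f, the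
   vertices v_6 and v_8 give the labels of a_7 and a_6, and the odd cycle
   v_1 ... v_5 makes the remaining system uniquely solvable.  Nonnegativity of
   the solved labels cuts out the cone b <= a + c, c <= b + d, c <= a + d,
   a <= c + f, a <= b + f, and the five types are the lattice points of the
   pieces  2a <= b;  a <= b < 2a, a <= c;  b < a, b <= c;  c < a, c < b <= 2c;
   c < a, 2c < b < 2a  of this cone, on each of which the coefficients l_i are
   read off linearly from (a, b, c, d, f). *)

Notation nat5 := (nat * nat * nat * nat * nat)%type.

Definition edge (k : nat) : 'I_12 := inord k.-1.
Arguments edge : simpl never.

Lemma edgeS k : 0 < k < 13 -> (edge k).+1 = k.
Proof. by case: k => // k /= lt_k12; rewrite /edge /= inordK. Qed.

Lemma edge_ord (i : 'I_12) : edge i.+1 = i.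
Proof. exact: inord_val. Qed.

Lemma vertex_sumE (x : lab) v :
  \sum_(i : 'I_12 | incident v i.+1) x i = \sum_(1 <= k < 13 | incident v k) x (edge k).
Proof. by rewrite big_add1 /= big_mkord; apply: eq_bigr => i _; rewrite edge_ord. Qed.

Lemma magicE (x : lab) : magic x <-> exists s,
  [/\ x (edge 1) + x (edge 5) + x (edge 6) = s,
      x (edge 1) + x (edge 2) + x (edge 7) = s,
      x (edge 2) + x (edge 3) + x (edge 8) = s,
      x (edge 3) + x (edge 4) + x (edge 9) = s
    & [/\ x (edge 4) + x (edge 5) + x (edge 10) = s,
          x (edge 7) + x (edge 8) + x (edge 11) = s,
          x (edge 9) + x (edge 11) + x (edge 12) = s
        & x (edge 6) + x (edge 10) + x (edge 12) = s]].
Proof.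
split=> -[s sumx]; exists s.
  have sumx_at v (lt_v8 : v < 8) := sumx (Ordinal lt_v8).
  move: (sumx_at 0 isT) (sumx_at 1 isT) (sumx_at 2 isT) (sumx_at 3 isT)
        (sumx_at 4 isT) (sumx_at 5 isT) (sumx_at 6 isT) (sumx_at 7 isT).
  rewrite !vertex_sumE unlock /= => *; repeat split; lia.
case: sumx => s1 s2 s3 s4 [s5 s6 s7 s8].
by case=> -[|[|[|[|[|[|[|[|//]]]]]]]] lt_v8; rewrite vertex_sumE unlock /=; lia.
Qed.

Lemma magic_ladd (x y : lab) : magic x -> magic y -> magic (x ⊕ y).
Proof.
move=> [s sumx] [t sumy]; exists (s + t) => v.
by rewrite -(sumx v) -(sumy v) -big_split; apply: eq_bigr => i _; rewrite ffunE.
Qed.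

Lemma magic_lscale n (x : lab) : magic x -> magic (n ⊙ x).
Proof.
move=> [s sumx]; exists (n * s) => v.
by rewrite -(sumx v) big_distrr; apply: eq_bigr => i _; rewrite ffunE.
Qed.

Lemma magic_gamma1 : magic gamma1. Proof. by apply/magicE; exists 1; rewrite /gamma1 !ffunE !edgeS. Qed.
Lemma magic_gamma2 : magic gamma2. Proof. by apply/magicE; exists 1; rewrite /gamma2 !ffunE !edgeS. Qed.
Lemma magic_gamma3 : magic gamma3. Proof. by apply/magicE; exists 1; rewrite /gamma3 !ffunE !edgeS. Qed.
Lemma magic_gamma4 : magic gamma4. Proof. by apply/magicE; exists 2; rewrite /gamma4 !ffunE !edgeS. Qed.
Lemma magic_gamma5 : magic gamma5. Proof. by apply/magicE; exists 2; rewrite /gamma5 !ffunE !edgeS. Qed.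
Lemma magic_gamma6 : magic gamma6. Proof. by apply/magicE; exists 1; rewrite /gamma6 !ffunE !edgeS. Qed.
Lemma magic_gamma7 : magic gamma7. Proof. by apply/magicE; exists 2; rewrite /gamma7 !ffunE !edgeS. Qed.
Lemma magic_gamma8 : magic gamma8. Proof. by apply/magicE; exists 1; rewrite /gamma8 !ffunE !edgeS. Qed.

Lemma magic_typed_form t l : magic (typed_form t l).
Proof.
case: l => [[[[l1 l2] l3] l4] l5].
by case: t; repeat first [ exact: magic_gamma1 | exact: magic_gamma2 | exact: magic_gamma3
  | exact: magic_gamma4 | exact: magic_gamma5 | exact: magic_gamma6 | exact: magic_gamma7
  | exact: magic_gamma8 | apply: magic_ladd | apply: magic_lscale ].
Qed.

Definition coord (x : lab) : nat5 :=
  (x (edge 8), x (edge 9), x (edge 10), x (edge 11), x (edge 12)).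

Definition add5 (u v : nat5) : nat5 :=
  let: (u1, u2, u3, u4, u5) := u in let: (v1, v2, v3, v4, v5) := v in
  (u1 + v1, u2 + v2, u3 + v3, u4 + v4, u5 + v5).

Definition scale5 (n : nat) (u : nat5) : nat5 :=
  let: (u1, u2, u3, u4, u5) := u in (n * u1, n * u2, n * u3, n * u4, n * u5).

Lemma coordD (x y : lab) : coord (x ⊕ y) = add5 (coord x) (coord y).
Proof. by rewrite /coord !ffunE. Qed.

Lemma coordZ n (x : lab) : coord (n ⊙ x) = scale5 n (coord x).
Proof. by rewrite /coord !ffunE. Qed.

Lemma coord_e k :
  coord (e k) = (nat_of_bool (8 == k), nat_of_bool (9 == k), nat_of_bool (10 == k),
                 nat_of_bool (11 == k), nat_of_bool (12 == k)).
Proof. by rewrite /coord !ffunE !edgeS. Qed.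

Lemma magic_coord_inj (x y : lab) : magic x -> magic y -> coord x = coord y -> x = y.
Proof.
move=> /magicE[s [x1 x2 x3 x4 [x5 x6 x7 x8]]] /magicE[t [y1 y2 y3 y4 [y5 y6 y7 y8]]].
case=> eq8 eq9 eq10 eq11 eq12; apply/ffunP => i; rewrite -(edge_ord i).
case: i => k /= lt_k12; do 12 (case: k lt_k12 => [_ | k lt_k12]; first lia); done.
Qed.

Definition in_cone (z : nat5) : Prop :=
  let: (a, b, c, d, f) := z in
  [/\ b <= a + c, c <= b + d, c <= a + d, a <= c + f & a <= b + f].

Lemma magic_coord_in_cone (x : lab) : magic x -> in_cone (coord x).
Proof. by move=> /magicE[s [x1 x2 x3 x4 [x5 x6 x7 x8]]]; split; lia. Qed.

Definition cone_coord (t : ty) (l : nat5) : nat5 :=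
  let: (l1, l2, l3, l4, l5) := l in
  match t with
  | Ta  => (l4, 2 * l4 + l5, l1 + l4 + l5, l1 + l2 + l5, l3)
  | Tb  => (l4 + l5 + 1, 2 * l4 + l5 + 1, l1 + l4 + l5 + 1, l1 + l2, l3)
  | Tc1 => (l4 + l5 + 1, l5, l1 + l5, l1 + l2, l3 + l4 + 1)
  | Tc2 => (l3 + l4 + l5 + 2, 2 * l3 + l5 + 2, l3 + l5 + 1, l1, l2 + l4 + 1)
  | Tc3 => (l3 + l4 + l5 + 1, 2 * l3 + l5 + 1, l3, l1, l2 + l4 + l5 + 1)
  end.

Lemma coord_typed_form t l : coord (typed_form t l) = cone_coord t l.
Proof.
case: l => [[[[l1 l2] l3] l4] l5].
by case: t; rewrite /typed_form /= /gamma1 /gamma2 /gamma3 /gamma4 /gamma5 /gamma6 /gamma7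
  /gamma8 !(coordD, coordZ, coord_e) /=; congr (_, _, _, _, _); lia.
Qed.

Lemma cone_coord_inj t l t' l' : cone_coord t l = cone_coord t' l' -> (t, l) = (t', l').
Proof.
case: l l' => [[[[l1 l2] l3] l4] l5] [[[[m1 m2] m3] m4] m5].
by case: t; case: t' => -[] *; first [exfalso; lia | congr (_, (_, _, _, _, _)); lia].
Qed.

Lemma cone_coord_onto z : in_cone z -> exists p : ty * nat5, cone_coord p.1 p.2 = z.
Proof.
case: z => [[[[a b] c] d] f] [le_b_ac le_c_bd le_c_ad le_a_cf le_a_bf].
have [le_2a_b | lt_b_2a] := leqP (2 * a) b.
  by exists (Ta, (a + c - b, a + d - c, f, a, b - 2 * a)); congr (_, _, _, _, _); lia.
have [/andP[le_a_b le_a_c] | not_Tb] := boolP ((a <= b) && (a <= c)).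
  by exists (Tb, (c - a, a + d - c, f, b - a, 2 * a - b - 1)); congr (_, _, _, _, _); lia.
have [/andP[lt_b_a le_b_c] | not_Tc1] := boolP ((b < a) && (b <= c)).
  by exists (Tc1, (c - b, b + d - c, b + f - a, a - b - 1, b)); congr (_, _, _, _, _); lia.
have [le_b_2c | lt_2c_b] := leqP b (2 * c).
  by exists (Tc2, (d, c + f - a, b - c - 1, a - c - 1, 2 * c - b)); congr (_, _, _, _, _); lia.
by exists (Tc3, (d, c + f - a, c, a + c - b, b - 2 * c - 1)); congr (_, _, _, _, _); lia.
Qed.

Theorem mainTheorem7 (gamma : lab) :
  magic gamma ->
  exists! p : ty * (nat * nat * nat * nat * nat), typed_form (fst p) (snd p) = gamma.
Proof.
move=> magic_gamma.
have /magic_coord_in_cone/cone_coord_onto[[t l] /= coord_gamma] := magic_gamma.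
have typed_gamma : typed_form t l = gamma.
  apply: magic_coord_inj => //; first exact: magic_typed_form.
  by rewrite coord_typed_form.
exists (t, l); split=> // -[t' l'] /= typed_gamma'.
by apply: cone_coord_inj; rewrite -!coord_typed_form typed_gamma typed_gamma'.
Qed.
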